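(* Let $n\ge1$ and let $H=[a_{ij}]\in M_n(\mathbb N)$ be a symmetric positive semidefinite matrix of nonnegative integers such that $\alpha_i:=a_{ii}\ge\max_{j\ne i}a_{ij}$ for every $1\le i\le n$. Let $$\mathcal{J}_H=\left\langle x_l^{\alpha_l},\ x_i^{\alpha_i-a_{ij}}x_j^{\alpha_j-a_{ij}} : 1\le l\le n,\ 1\le i<j\le n\right\rangle\subseteq R_n.$$ Then $\dim_{\mathbb K}\left(R_n/\mathcal{J}_H\right)\ge\det H$.
   Context: $\mathbb K$ is a field and $R_n=\mathbb K[x_1,\ldots,x_n]$; $\mathbb N$ denotes the nonnegative integers. $\dim_{\mathbb K}$ is the dimension as a $\mathbb K$-vector space (finite since all $x_l^{\alpha_l}$ lie in $\mathcal{J}_H$). *)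

From HB Require Import structures.
From mathcomp Require Import all_boot all_order all_algebra.
From mathcomp Require Import mpoly.
From mathcomp Require Import Rstruct.
From Stdlib Require Import Reals.
Set Implicit Arguments. Unset Strict Implicit. Unset Printing Implicit Defensive.
Import Order.TTheory GRing.Theory Num.Theory.
Local Open Scope ring_scope.

Definition Hint (n : nat) (H : 'M[nat]_n) : 'M[int]_n :=
  map_mx (fun a : nat => a%:Z) H.

Definition psd_real (n : nat) (H : 'M[nat]_n) : Prop :=
  forall v : 'cV[R]_n,
    0 <= (v^T *m map_mx (fun a : nat => a%:R : R) H *m v) 0 0.

Definition in_JH (K : fieldType) (n : nat) (H : 'M[nat]_n) (p : {mpoly K[n]})
  : Prop :=
  exists (q1 : 'I_n -> {mpoly K[n]}) (q2 : 'I_n -> 'I_n -> {mpoly K[n]}),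
    p = \sum_(l < n) q1 l * 'X_l ^+ (H l l)
      + \sum_(i < n) \sum_(j < n | ltn i j)
          q2 i j * ('X_i ^+ (H i i - H i j) * 'X_j ^+ (H j j - H i j)).

Definition lin_indep_mod_JH (K : fieldType) (n : nat) (H : 'M[nat]_n)
  (k : nat) (p : 'I_k -> {mpoly K[n]}) : Prop :=
  forall c : 'I_k -> K,
    in_JH H (\sum_(t < k) c t *: p t) -> forall t, c t = 0.

From HB Require Import structures.
From mathcomp Require Import all_boot all_order all_algebra.
From mathcomp Require Import mpoly.
From mathcomp Require Import zify ring lra.
From mathcomp Require Import Rstruct.
From Stdlib Require Import Classical.
Set Implicit Arguments. Unset Strict Implicit. Unset Printing Implicit Defensive.
Import Order.TTheory GRing.Theory Num.Theory.
Local Open Scope ring_scope.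

(* A monomial outside J_H is x^(alpha - 1 - c) with c_k < alpha_k for all k and
   a_kl <= max (c_k, c_l) for all k <> l; call the set of such c the staircase
   of H.  If alpha_i > 0 and every a_ij (j <> i) is < alpha_i, the staircase
   splits into the points with c_i < alpha_i - 1, which form the staircase of
   H - E_ii, and those with c_i = alpha_i - 1, which are in bijection with the
   staircase of the principal minor H_ii.  Since
   det H = det (H - E_ii) + det H_ii, induction on n and on the trace gives the
   bound whenever H - E_ii is still positive semidefinite; if it is not, then
   det (H - E_ii) <= 0 because H is.  If no such i exists, H has a nonzero
   isotropic vector, so det H = 0. *)

Lemma trmx_principal_minor (T : Type) n (A : 'M[T]_n.+1) i :
  A^T = A -> (row' i (col' i A))^T = row' i (col' i A).
Proof. by move=> sA; apply/matrixP => k l; rewrite !mxE -[in RHS]sA mxE. Qed.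

Section QuadraticForm.
Variable F : realFieldType.

Definition qform n (A : 'M[F]_n) (u v : 'cV[F]_n) : F := (u^T *m A *m v) 0 0.

Definition psd n (A : 'M[F]_n) := forall v : 'cV[F]_n, 0 <= qform A v v.

Lemma qformDl n (A : 'M[F]_n) u1 u2 v :
  qform A (u1 + u2) v = qform A u1 v + qform A u2 v.
Proof. by rewrite /qform linearD /= !mulmxDl mxE. Qed.

Lemma qformDr n (A : 'M[F]_n) u v1 v2 :
  qform A u (v1 + v2) = qform A u v1 + qform A u v2.
Proof. by rewrite /qform mulmxDr mxE. Qed.

Lemma qformZl n (A : 'M[F]_n) a u v : qform A (a *: u) v = a * qform A u v.
Proof. by rewrite /qform linearZ /= -!scalemxAl mxE. Qed.

Lemma qformZr n (A : 'M[F]_n) a u v : qform A u (a *: v) = a * qform A u v.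
Proof. by rewrite /qform -scalemxAr mxE. Qed.

Lemma qformBmx n (A B : 'M[F]_n) u v : qform (A - B) u v = qform A u v - qform B u v.
Proof. by rewrite /qform mulmxBr mulmxBl !mxE. Qed.

Lemma qformC n (A : 'M[F]_n) u v : A^T = A -> qform A u v = qform A v u.
Proof.
move=> sA; have tr_uv : (u^T *m A *m v)^T = v^T *m A *m u.
  by rewrite !trmx_mul trmxK sA mulmxA.
by rewrite /qform -tr_uv [in RHS]mxE.
Qed.

Lemma qformE n (A : 'M[F]_n) u v :
  qform A u v = \sum_l \sum_k u k 0 * A k l * v l 0.
Proof.
rewrite /qform mxE; apply: eq_bigr => l _; rewrite mxE mulr_suml.
by apply: eq_bigr => k _; rewrite mxE.
Qed.

Lemma qform_delta n (A : 'M[F]_n) i j : qform A (delta_mx i 0) (delta_mx j 0) = A i j.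
Proof. by rewrite /qform -mulmxA -colE trmx_delta -rowE !mxE. Qed.

Lemma qform_delta_mx n (i : 'I_n) w : qform (delta_mx i i) w w = w i 0 ^+ 2.
Proof.
rewrite qformE (bigD1 i) //= [X in _ + X]big1 => [|l /negPf nl]; last first.
  by apply: big1 => k _; rewrite mxE nl andbF mulr0 mul0r.
rewrite addr0 (bigD1 i) //= [X in _ + X]big1 => [|k /negPf nk]; last first.
  by rewrite mxE nk mulr0 mul0r.
by rewrite mxE !eqxx mulr1 addr0 expr2.
Qed.

Lemma psd_isotropic n (A : 'M[F]_n) x y :
  A^T = A -> psd A -> qform A x x = 0 -> qform A x y = 0.
Proof.
move=> sA pA qx0; set b := qform A x y; set r := qform A y y.
have r_ge0 : 0 <= r by apply: pA.
have r1_gt0 : 0 < r + 1 by lra.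
set t := - b / (r + 1).
have tE : t * (r + 1) = - b by rewrite /t divfK // gt_eqF.
have := pA (x + t *: y).
rewrite !qformDl !qformDr !qformZl !qformZr qx0 (qformC y x sA) -/b -/r => q_ge0.
(* since [t (r + 1) = - b], the form at [x + t y] equals [- t^2 (r + 2)] *)
have t0 : t = 0 by nra.
by move: tE; rewrite t0 mul0r => /eqP; rewrite eq_sym oppr_eq0 => /eqP.
Qed.

Lemma dotmx_self_eq0 n (y : 'cV[F]_n) : (y^T *m y) 0 0 = 0 -> y = 0.
Proof.
rewrite mxE => /eqP; rewrite psumr_eq0 => [/allP y0|k _]; last first.
  by rewrite mxE -expr2 sqr_ge0.
apply/matrixP => k l; rewrite (ord1 l) mxE.
by have /= := y0 k (mem_index_enum k); rewrite mxE -expr2 sqrf_eq0 => /eqP.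
Qed.

Lemma psd_kernel n (A : 'M[F]_n) x :
  A^T = A -> psd A -> qform A x x = 0 -> A *m x = 0.
Proof.
move=> sA pA qx0; apply: dotmx_self_eq0.
have := psd_isotropic (A *m x) sA pA qx0.
by rewrite /qform trmx_mul sA mulmxA.
Qed.

Lemma det_kernel n (A : 'M[F]_n) (x : 'cV[F]_n) : A *m x = 0 -> x != 0 -> \det A = 0.
Proof.
move=> Ax0 x_neq0; have : \adj A *m (A *m x) = \det A *: x.
  by rewrite mulmxA mul_adj_mx mul_scalar_mx.
by rewrite Ax0 mulmx0 => /esym/eqP; rewrite scaler_eq0 (negPf x_neq0) orbF => /eqP.
Qed.

Definition adjcol n (A : 'M[F]_n) i : 'cV[F]_n := \adj A *m delta_mx i 0.

Lemma mul_adjcol n (A : 'M[F]_n) i : A *m adjcol A i = \det A *: delta_mx i 0.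
Proof. by rewrite /adjcol mulmxA mul_mx_adj mul_scalar_mx. Qed.

Lemma adjcol_diag n (A : 'M[F]_n) i : adjcol A i i 0 = cofactor A i i.
Proof. by rewrite /adjcol -colE !mxE. Qed.

Lemma qform_adjcol n (A : 'M[F]_n) w i : qform A w (adjcol A i) = \det A * w i 0.
Proof. by rewrite /qform -mulmxA mul_adjcol -scalemxAr mxE -colE !mxE. Qed.

Lemma det_eq0_mul_adjcol n (A : 'M[F]_n) i :
  A *m adjcol A i = 0 -> \det A = 0.
Proof.
by rewrite mul_adjcol => /matrixP/(_ i 0); rewrite !mxE !eqxx mulr1.
Qed.

Lemma cofactor_diag n (A : 'M[F]_n.+1) i : cofactor A i i = \det (row' i (col' i A)).
Proof. by rewrite /cofactor addnn -signr_odd odd_double expr0 mul1r. Qed.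

Lemma psd_principal_minor n (A : 'M[F]_n.+1) i : psd A -> psd (row' i (col' i A)).
Proof.
move=> pA v; pose w : 'cV[F]_n.+1 := \col_k oapp (v ^~ 0) 0 (unlift i k).
suff <- : qform A w w = qform (row' i (col' i A)) v v by apply: pA.
rewrite !qformE (bigD1_ord i) //= big1 => [|k _]; last by rewrite !mxE unlift_none mulr0.
rewrite add0r; apply: eq_bigr => l _.
rewrite (bigD1_ord i) //= !mxE unlift_none !mul0r add0r.
by apply: eq_bigr => k _; rewrite !mxE !liftK.
Qed.

Lemma psd_det_ge0 n (A : 'M[F]_n) : A^T = A -> psd A -> 0 <= \det A.
Proof.
elim: n A => [|n IH] A sA pA; first by rewrite det_mx00.
have cof_ge0 : 0 <= cofactor A 0 0.
  rewrite cofactor_diag; apply: IH.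
    exact: trmx_principal_minor.
  exact: psd_principal_minor.
have := pA (adjcol A 0); rewrite qform_adjcol adjcol_diag.
case: (ltrgt0P (cofactor A 0 0)) cof_ge0 => // [cof_gt0 _|cof0 _ _].
  by rewrite pmulr_lge0.
suff -> : \det A = 0 by [].
apply: (@det_eq0_mul_adjcol _ A 0); apply: psd_kernel => //.
by rewrite qform_adjcol adjcol_diag cof0 mulr0.
Qed.

Lemma det_sub_delta n (A : 'M[F]_n) i :
  \det A = \det (A - delta_mx i i) + cofactor A i i.
Proof.
rewrite (expand_det_col A i) (expand_det_col (A - delta_mx i i) i).
have cofE k : cofactor (A - delta_mx i i) k i = cofactor A k i.
  rewrite /cofactor; congr (_ * \det _); apply/matrixP => a b; rewrite !mxE.
  by rewrite [lift i b == i]eq_sym (negPf (neq_lift i b)) andbF subr0.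
rewrite (bigD1 i) //= [in RHS](bigD1 i) //= cofE !mxE !eqxx /= addrAC; congr (_ + _).
  by rewrite mulrBl mul1r subrK.
by apply: eq_bigr => k /negPf nk; rewrite cofE !mxE nk /= subr0.
Qed.

Lemma det_le_cofactor n (A : 'M[F]_n) i w : A^T = A -> psd A ->
  0 <= cofactor A i i -> qform A w w < w i 0 ^+ 2 -> \det A <= cofactor A i i.
Proof.
move=> sA pA; set C := cofactor A i i; set u := adjcol A i => C_ge0 qw_lt.
have quu : qform A u u = \det A * C by rewrite qform_adjcol adjcol_diag.
have qwu : qform A w u = \det A * w i 0 by rewrite qform_adjcol.
have quw : qform A u w = \det A * w i 0 by rewrite qformC.
have qw_ge0 := pA w.
case: (ltrgt0P C) C_ge0 => // [C_gt0 _|C0 _]; last first.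
  suff -> : \det A = 0 by rewrite C0.
  apply: (@det_eq0_mul_adjcol _ A i); apply: psd_kernel => //.
  by rewrite quu C0 mulr0.
(* the form at [C w - w_i u] equals [C (C q(w) - w_i^2 det A)] *)
have := pA (C *: w + (- w i 0) *: u).
rewrite !qformDl !qformDr !qformZl !qformZr quu qwu quw.
set q := qform A w w in qw_lt qw_ge0 *; set d := \det A; set a := w i 0 in qw_lt * => h.
have : 0 <= C * (C * q - a ^+ 2 * d) by rewrite -[X in _ <= X]opprK; lra.
rewrite pmulr_rge0 //; nra.
Qed.

Lemma det_sub_delta_le0 n (A : 'M[F]_n.+1) i : A^T = A -> psd A ->
  ~ psd (A - delta_mx i i) -> \det (A - delta_mx i i) <= 0.
Proof.
move=> sA pA not_psd.
have [w qw_lt0] : exists w, qform (A - delta_mx i i) w w < 0.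
  apply: NNPP => no_w; apply: not_psd => w; rewrite leNgt; apply/negP => qw_lt0.
  by apply: no_w; exists w.
rewrite qformBmx qform_delta_mx subr_lt0 in qw_lt0.
have cof_ge0 : 0 <= cofactor A i i.
  rewrite cofactor_diag; apply: psd_det_ge0.
    exact: trmx_principal_minor.
  exact: psd_principal_minor.
by have := det_le_cofactor sA pA cof_ge0 qw_lt0; rewrite (det_sub_delta A i); lra.
Qed.

End QuadraticForm.

Section Staircase.
Local Open Scope nat_scope.
Variable N : nat.

(* [c] encodes the monomial with exponents [H k k - 1 - c k]. *)
Definition staircase n (H : 'M[nat]_n) : {set {ffun 'I_n -> 'I_N}} :=
  [set c : {ffun 'I_n -> 'I_N} | [forall k, c k < H k k]
         & [forall k, forall l, (k != l) ==> (H k l <= maxn (c k) (c l))]].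

Lemma card_staircase0 (H : 'M[nat]_0) : #|staircase H| = 1.
Proof.
suff -> : staircase H = setT by rewrite cardsT card_ffun !card_ord.
by apply/setP => c; rewrite !inE; apply/andP; split; apply/forallP => -[].
Qed.

Definition decr_diag n (i : 'I_n) (H : 'M[nat]_n) : 'M[nat]_n :=
  \matrix_(k, l) (H k l - ((k == i) && (l == i))).

Lemma decr_diag_offdiag n (H : 'M[nat]_n) i k l : k != l -> decr_diag i H k l = H k l.
Proof.
move=> kl; rewrite mxE; case: eqP => [ki|]; last by rewrite subn0.
by rewrite -ki eq_sym (negPf kl) subn0.
Qed.

Lemma decr_diag_diag n (H : 'M[nat]_n) i k :
  decr_diag i H k k = if k == i then (H k k).-1 else H k k.
Proof. by rewrite mxE andbb; case: (k == i); rewrite ?subn1 ?subn0. Qed.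

Lemma staircase_decr_diag n (H : 'M[nat]_n) i : 0 < H i i ->
  staircase (decr_diag i H) = [set c in staircase H | c i != (H i i).-1 :> nat].
Proof.
move=> Hi_gt0; apply/setP => c; rewrite !inE andbAC; congr andb; last first.
  by apply: eq_forallb => k; apply: eq_forallb => l; case: (boolP (k != l)) => // kl;
    rewrite decr_diag_offdiag.
apply/forallP/andP => [c_lt|[/forallP c_lt ci]] => [|k].
  have := c_lt i; rewrite decr_diag_diag eqxx => ci; split; last by rewrite ltn_eqF.
  apply/forallP => k; have := c_lt k; rewrite decr_diag_diag.
  by case: (k =P i) => [->|//]; lia.
rewrite decr_diag_diag; case: (k =P i) => [->|_]; last exact: c_lt.
by rewrite ltn_neqAle ci -ltnS prednK // c_lt.
Qed.

Section Slice.
Variables (n : nat) (H : 'M[nat]_n.+1) (i : 'I_n.+1).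
Hypotheses (sH : (H^T)%R = H) (Hi_gt0 : 0 < H i i) (Hi_le : H i i <= N)
  (row_lt : forall j, j != i -> H i j < H i i).

Let top_lt : (H i i).-1 < N. Proof. by rewrite prednK. Qed.
Let top : 'I_N := Ordinal top_lt.
Let minor := row' i (col' i H).
Let slice := [set c in staircase H | c i == top].
Let restr (c : {ffun 'I_n.+1 -> 'I_N}) : {ffun 'I_n -> 'I_N} := [ffun k => c (lift i k)].
Let extend (d : {ffun 'I_n -> 'I_N}) : {ffun 'I_n.+1 -> 'I_N} :=
  [ffun k => if unlift i k is Some j then d j else top].

Lemma restr_extend d : restr (extend d) = d.
Proof. by apply/ffunP => k; rewrite !ffunE liftK. Qed.

Lemma extend_restr c : c \in slice -> extend (restr c) = c.
Proof.
rewrite inE => /andP [_ /eqP ci]; apply/ffunP => k; rewrite !ffunE.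
by case: unliftP => [j ->|->]; rewrite ?ffunE.
Qed.

Lemma restr_slice c : c \in slice -> restr c \in staircase minor.
Proof.
rewrite !inE => /andP [/andP [/forallP c_lt /forallP c_cov] _]; apply/andP; split.
  by apply/forallP => k; rewrite ffunE !mxE; apply: c_lt.
apply/forallP => k; apply/forallP => l; apply/implyP => kl; rewrite !ffunE !mxE.
by have /forallP/(_ (lift i l))/implyP := c_cov (lift i k); apply; rewrite (inj_eq lift_inj).
Qed.

(* Entries [H k i] with [k != i] are covered by [c i = H i i - 1] because row
   [i] is strictly below its diagonal entry. *)
Lemma extend_staircase d : d \in staircase minor -> extend d \in slice.
Proof.
rewrite !inE => /andP [/forallP d_lt /forallP d_cov].
have di : extend d i = top by rewrite ffunE unlift_none.
have Hsym k l : H k l = H l k by rewrite -[in RHS]sH mxE.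
rewrite di eqxx andbT; apply/andP; split.
  apply/forallP => k; rewrite ffunE; case: unliftP => [j ->|->]; last by rewrite /= prednK.
  by have := d_lt j; rewrite !mxE.
apply/forallP => k; apply/forallP => l; apply/implyP => kl.
case: (unliftP i k) => [k1|] ek; case: (unliftP i l) => [l1|] el; rewrite ek el in kl *.
- rewrite !ffunE !liftK; have /forallP/(_ l1)/implyP := d_cov k1; rewrite !mxE; apply.
  by apply: contra kl => /eqP->.
- by have := row_lt kl; rewrite di Hsym /=; lia.
- by rewrite eq_sym in kl; have := row_lt kl; rewrite di /=; lia.
- by rewrite eqxx in kl.
Qed.

Lemma card_slice : #|slice| = #|staircase minor|.
Proof.
rewrite -(card_in_imset (f := restr)); last first.
  move=> c1 c2 c1_in c2_in eq12.
  by rewrite -(extend_restr c1_in) -(extend_restr c2_in) eq12.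
suff -> : restr @: slice = staircase minor by [].
apply/setP => d; apply/imsetP/idP => [[c c_in ->]|d_in].
  exact: restr_slice.
by exists (extend d); [apply: extend_staircase | rewrite restr_extend].
Qed.

Lemma card_staircase_split :
  #|staircase H| = #|staircase (decr_diag i H)| + #|staircase minor|.
Proof.
rewrite -card_slice staircase_decr_diag //.
rewrite -(cardsID [set c : {ffun _ -> _} | c i != top] (staircase H)).
by congr (_ + _); apply: eq_card => c; rewrite !inE ?negbK andbC.
Qed.

End Slice.

End Staircase.

Definition diag_rowmax n (H : 'M[nat]_n) :=
  forall i j, j != i -> (H i j <= H i i)%N.

Definition pivot n (H : 'M[nat]_n) i :=
  (0 < H i i)%N && [forall j, (j != i) ==> (H i j < H i i)%N].

Lemma diag_rowmax_minor n (H : 'M[nat]_n.+1) i :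
  diag_rowmax H -> diag_rowmax (row' i (col' i H)).
Proof. by move=> Hmax k l lk; rewrite !mxE; apply: Hmax; rewrite (inj_eq lift_inj). Qed.

Lemma trmx_decr_diag n (H : 'M[nat]_n) i : H^T = H -> (decr_diag i H)^T = decr_diag i H.
Proof. by move=> sH; apply/matrixP => k l; rewrite !mxE -[in RHS]sH mxE andbC. Qed.

Lemma diag_rowmax_decr_diag n (H : 'M[nat]_n) i :
  pivot H i -> diag_rowmax H -> diag_rowmax (decr_diag i H).
Proof.
move=> /andP [_ /forallP row_lt] Hmax k l lk; have kl : k != l by rewrite eq_sym.
rewrite decr_diag_offdiag // decr_diag_diag; case: (k =P i) => [ki|_]; last exact: Hmax.
by rewrite ki in lk *; have /implyP/(_ lk) := row_lt l; lia.
Qed.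

Lemma trace_decr_diag n (H : 'M[nat]_n) i :
  (0 < H i i)%N -> (\sum_k decr_diag i H k k).+1 = \sum_k H k k.
Proof.
move=> Hi_gt0; rewrite (bigD1 i) //= [in RHS](bigD1 i) //= decr_diag_diag eqxx.
rewrite -addSn prednK //; congr (_ + _)%N.
by apply: eq_bigr => k /negPf ki; rewrite decr_diag_diag ki.
Qed.

Section DetBound.
Variables (F : realFieldType) (N : nat).

Definition natmx n (H : 'M[nat]_n) : 'M[F]_n := map_mx (fun a : nat => a%:R) H.

Lemma trmx_natmx n (H : 'M[nat]_n) : H^T = H -> (natmx H)^T = natmx H.
Proof. by move=> sH; rewrite /natmx map_trmx sH. Qed.

Lemma natmx_minor n (H : 'M[nat]_n.+1) i :
  natmx (row' i (col' i H)) = row' i (col' i (natmx H)).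
Proof. by apply/matrixP => k l; rewrite !mxE. Qed.

Lemma natmx_decr_diag n (H : 'M[nat]_n) i :
  (0 < H i i)%N -> natmx (decr_diag i H) = natmx H - delta_mx i i.
Proof.
move=> Hi_gt0; apply/matrixP => k l; rewrite !mxE.
by case: (k =P i) => [->|_]; case: (l =P i) => [->|_] //=; rewrite ?subn0 ?subr0 // natrB.
Qed.

(* The kernel vector is [e_k] if [H k k = 0], else [e_i - e_j] where [H i i]
   is a maximal diagonal entry and [H i j = H i i]. *)
Lemma det_natmx_eq0_no_pivot n (H : 'M[nat]_n.+1) : H^T = H -> psd (natmx H) ->
  diag_rowmax H -> (forall i, ~~ pivot H i) -> \det (natmx H) = 0.
Proof.
move=> sH pH Hmax no_pivot; have sA := trmx_natmx sH.
have Hsym k l : H k l = H l k by rewrite -[in RHS]sH mxE.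
have [[k /eqP Hk0]|/existsPn Hdiag_gt0] := altP (@existsP _ (fun k => H k k == 0%N)).
  apply: (@det_kernel _ _ _ (delta_mx k 0)).
    by apply: psd_kernel => //; rewrite qform_delta mxE Hk0.
  by apply/eqP => /matrixP/(_ k 0); rewrite !mxE !eqxx => /eqP; rewrite oner_eq0.
have [i _ i_max] := @arg_maxnP _ ord0 xpredT (fun k => H k k) isT.
have := no_pivot i; rewrite /pivot lt0n Hdiag_gt0 /=.
case/forallPn => j; rewrite negb_imply -leqNgt => /andP [ji Hij].
have Hij_eq : H i j = H i i by apply/eqP; rewrite eqn_leq Hij Hmax.
have Hjj_eq : H j j = H i i.
  have ij : i != j by rewrite eq_sym.
  by have := Hmax j i ij; rewrite Hsym Hij_eq; have := i_max j isT; lia.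
apply: (@det_kernel _ _ _ (delta_mx i 0 - delta_mx j 0)).
  apply: psd_kernel => //.
  rewrite !qformDl !qformDr -!scaleN1r !qformZl !qformZr !qform_delta !mxE.
  rewrite (Hsym j i) Hij_eq Hjj_eq; ring.
apply/eqP => /matrixP/(_ i 0); rewrite !mxE !eqxx eq_sym (negPf ji) /= subr0.
by move/eqP; rewrite oner_eq0.
Qed.

Lemma det_natmx_le_card_pivot n (H : 'M[nat]_n.+1) i :
  H^T = H -> psd (natmx H) -> pivot H i -> (H i i <= N)%N ->
  \det (natmx (row' i (col' i H))) <= #|staircase N (row' i (col' i H))|%:R ->
  (psd (natmx (decr_diag i H)) ->
    \det (natmx (decr_diag i H)) <= #|staircase N (decr_diag i H)|%:R) ->
  \det (natmx H) <= #|staircase N H|%:R.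
Proof.
move=> sH pH /andP [Hi_gt0 /forallP row_lt] Hi_le le_minor le_decr.
rewrite (card_staircase_split sH Hi_gt0 Hi_le (fun j => implyP (row_lt j))) natrD.
rewrite (det_sub_delta _ i) cofactor_diag -natmx_minor -natmx_decr_diag //.
apply: lerD => //; have [|not_psd] := classic (psd (natmx (decr_diag i H))).
  exact: le_decr.
apply: le_trans (ler0n _ _); rewrite natmx_decr_diag //.
by apply: det_sub_delta_le0 => //; [exact: trmx_natmx | rewrite -natmx_decr_diag].
Qed.

Lemma det_natmx_le_card_staircase n (H : 'M[nat]_n) :
  H^T = H -> psd (natmx H) -> diag_rowmax H -> (forall i, H i i <= N)%N ->
  \det (natmx H) <= #|staircase N H|%:R.
Proof.
elim: n H => [|n IHn] H; first by rewrite det_mx00 card_staircase0.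
have [s] := ubnP (\sum_k H k k); elim: s H => // s IHs H.
rewrite ltnS => trace_le sH pH Hmax H_le.
have [/existsP [i piv]|/existsPn no_pivot] := boolP [exists i, pivot H i]; last first.
  by rewrite det_natmx_eq0_no_pivot.
apply: (det_natmx_le_card_pivot sH pH piv (H_le i)) => [|psd_decr].
  apply: IHn; first exact: trmx_principal_minor.
  - by rewrite natmx_minor; apply: psd_principal_minor.
  - exact: diag_rowmax_minor.
  - by move=> k; rewrite !mxE.
have /andP [Hi_gt0 _] := piv.
apply: IHs => //; first by rewrite -ltnS trace_decr_diag.
- exact: trmx_decr_diag.
- exact: diag_rowmax_decr_diag.
- by move=> k; rewrite decr_diag_diag; case: (k == i); have := H_le k; lia.
Qed.

Lemma det_natmx n (H : 'M[nat]_n) : \det (natmx H) = (\det (Hint H))%:~R.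
Proof.
have -> : natmx H = map_mx (fun z : int => z%:~R) (Hint H).
  by apply/matrixP => k l; rewrite !mxE.
by rewrite det_map_mx.
Qed.

End DetBound.

Lemma mcoeff_MX_eq0 (K : fieldType) n (p : {mpoly K[n]}) g m :
  ~~ (g <= m)%MM -> (p * 'X_[g])@_m = 0.
Proof.
move=> g_le_m; apply: memN_msupp_eq0; rewrite (perm_mem (msuppMX p g)).
by apply: contra g_le_m => /mapP [m' _ ->]; rewrite lem_addr.
Qed.

Section StaircaseMonomials.
Variables (K : fieldType) (N n : nat) (H : 'M[nat]_n).
Hypotheses (sH : H^T = H) (Hmax : diag_rowmax H).

Definition staircase_mono (c : {ffun 'I_n -> 'I_N}) : 'X_{1..n} :=
  [multinom ((H l l).-1 - c l)%N | l < n].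

Lemma staircase_mono_inj : {in staircase N H &, injective staircase_mono}.
Proof.
move=> c1 c2; rewrite !inE => /andP [/forallP c1_lt _] /andP [/forallP c2_lt _] /mnmP eq12.
apply/ffunP => l; apply: val_inj => /=.
by have := eq12 l; rewrite !mnmE; have := c1_lt l; have := c2_lt l; lia.
Qed.

Lemma mcoeff_staircase_mono_pure c (q : {mpoly K[n]}) l : c \in staircase N H ->
  (q * 'X_l ^+ (H l l))@_(staircase_mono c) = 0.
Proof.
rewrite inE => /andP [/forallP c_lt _].
rewrite mpolyXn mcoeff_MX_eq0 //; apply/negP => /mnm_lepP /(_ l).
by rewrite mulmnE mnm1E eqxx mnmE; have := c_lt l; lia.
Qed.

Lemma mcoeff_staircase_mono_mixed c (q : {mpoly K[n]}) (i j : 'I_n) :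
  c \in staircase N H -> (i < j)%N ->
  (q * ('X_i ^+ (H i i - H i j) * 'X_j ^+ (H j j - H i j)))@_(staircase_mono c) = 0.
Proof.
rewrite inE => /andP [/forallP c_lt /forallP c_cov] ij.
have ne_ij : i != j by rewrite neq_ltn ij.
have ne_ji : j != i by rewrite eq_sym.
rewrite !mpolyXn -mpolyXD mcoeff_MX_eq0 //; apply/negP => /mnm_lepP le_c.
have := le_c i; have := le_c j.
rewrite !mnmDE !mulmnE !mnm1E !eqxx !mnmE (negPf ne_ij) (negPf ne_ji).
have /forallP/(_ j)/implyP/(_ ne_ij) := c_cov i.
have := c_lt i; have := c_lt j; have := Hmax ne_ji; have := Hmax ne_ij.
by rewrite -[in H j i]sH mxE; lia.
Qed.

Lemma mcoeff_JH_staircase_mono (p : {mpoly K[n]}) c :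
  in_JH H p -> c \in staircase N H -> p@_(staircase_mono c) = 0.
Proof.
move=> [q1 [q2 ->]] c_in; rewrite raddfD !raddf_sum /=.
rewrite big1 ?add0r => [|l _]; last exact: mcoeff_staircase_mono_pure.
apply: big1 => i _; rewrite raddf_sum; apply: big1 => j ij.
exact: mcoeff_staircase_mono_mixed.
Qed.

Lemma lin_indep_staircase_mono :
  lin_indep_mod_JH H
    (fun t : 'I_#|staircase N H| => 'X_[staircase_mono (enum_val t)] : {mpoly K[n]}).
Proof.
move=> c JH_c t; have := mcoeff_JH_staircase_mono JH_c (enum_valP t).
rewrite raddf_sum (bigD1 t) //= big1 => [|s st]; last first.
  rewrite mcoeffZ mcoeffX; case: eqP => [eq_st|]; last by rewrite mulr0.
  have /enum_val_inj eq_st' := staircase_mono_inj (enum_valP s) (enum_valP t) eq_st.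
  by rewrite eq_st' eqxx in st.
by rewrite mcoeffZ mcoeffX eqxx mulr1 addr0.
Qed.

End StaircaseMonomials.

Theorem theorem2 (K : fieldType) (n : nat) (H : 'M[nat]_n) :
  (1 <= n)%N ->
  H^T = H ->
  psd_real H ->
  (forall i j : 'I_n, j != i -> (H i j <= H i i)%N) ->
  exists (k : nat) (p : 'I_k -> {mpoly K[n]}),
    lin_indep_mod_JH H p /\ \det (Hint H) <= k%:Z.
Proof.
move=> _ sH pH Hmax; pose N := (\sum_k H k k)%N.
exists #|staircase N H|, (fun t => 'X_[staircase_mono H (enum_val t)]); split.
  exact: lin_indep_staircase_mono.
have H_le i : (H i i <= N)%N by rewrite /N (bigD1 i) //= leq_addr.
have := det_natmx_le_card_staircase sH pH Hmax H_le.
by rewrite det_natmx -(ler_int Rdefinitions.R).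
Qed.
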